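(* Let $(c_1,\dots,c_m)\in\mathbb{Z}^m$ be a quiddity cycle with $m>3$. Then there are indices $j,k\in\{1,\dots,m\}$ such that: - $|j-k|>1$ and $\{j,k\}\ne\{1,m\}$, i.e. $j,k$ are not cyclically adjacent; - $|c_j|<2$ and $|c_k|<2$.
   Context: $\eta(c)=\begin{pmatrix}c&-1\\1&0\end{pmatrix}$. A quiddity cycle is $(c_1,\dots,c_m)$ with $\eta(c_1)\cdots\eta(c_m)=-I$. *)

From HB Require Import structures.
From mathcomp Require Import all_boot all_order all_algebra.
Set Implicit Arguments. Unset Strict Implicit. Unset Printing Implicit Defensive.
Import Order.TTheory GRing.Theory Num.Theory.
Local Open Scope ring_scope.

Definition eta (c : int) : 'M[int]_2 :=
  \matrix_(i < 2, j < 2)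
    (if (i == 0 :> nat) && (j == 0 :> nat) then c
     else if (i == 0 :> nat) then -1
     else if (j == 0 :> nat) then 1 else 0).

Definition quiddity_cycle (c : seq int) : Prop :=
  \prod_(x <- c) eta x = - 1%:M.

From Pilot Require Import Defs.
From HB Require Import structures.
From mathcomp Require Import all_boot all_order all_algebra.
From mathcomp Require Import zify.
Import Order.TTheory GRing.Theory Num.Theory.

Set Implicit Arguments.
Unset Strict Implicit.
Unset Printing Implicit Defensive.

(* If every entry of u satisfies |c| >= 2, the first row (x, y) of the product
   of the eta(c), c in u, evolves as (x, y) |-> (c x + y, -x), so |x| grows
   strictly and exceeds size u.  On the other hand a quiddity cycle
   u ++ [:: a; b] gives prod(u) = -(eta a * eta b)^-1, whose (0,0) entry is 1.
   Hence, quiddity cycles being invariant under rotation, every cyclic window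
   of m - 2 consecutive positions contains an entry with |c| < 2, and three
   such windows already yield two non-adjacent ones. *)

Definition cyclically_far (m j k : nat) : bool :=
  (1 < `|(j%:Z - k%:Z)%R|)%N && ~~ ((j == 0%N) && (k == m.-1) || (k == 0%N) && (j == m.-1)).

Lemma modn_double x m : x < m + m -> x %% m = if x < m then x else x - m.
Proof.
case: (ltnP x m) => [/modn_small -> //|m_le_x x_lt].
by rewrite -{1}(subnK m_le_x) modnDr modn_small // ltn_subLR.
Qed.

(* The window starting at k omits exactly the positions k - 2 and k - 1 mod m.
   Given a in the window at 0, a point y of the window at a + 1 adjacent to a
   must be a + 1, and a point z of the window at a + 2 adjacent to a must be
   a - 1; then y and z are far apart since m > 3. *)
Lemma far_pair_of_windows (m : nat) (P : pred nat) : 3 < m ->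
  (forall k, k < m -> exists2 j, j < m - 2 & P ((k + j) %% m)) ->
  exists j k, [/\ j < m, k < m, cyclically_far m j k, P j & P k].
Proof.
move=> m_gt3 window.
have [|a a_lt Pa] := window 0; first lia.
rewrite add0n modn_small in Pa; last lia.
have [|x x_lt] := window a.+1; first lia.
rewrite modn_double; last lia.
set y := if _ then _ else _ => Py.
have [|x' x'_lt] := window a.+2; first lia.
rewrite modn_double; last lia.
set z := if _ then _ else _ => Pz.
have a_lt_m : a < m by lia.
have y_lt : y < m by rewrite /y; case: ifP; lia.
have z_lt : z < m by rewrite /z; case: ifP; lia.
have [far_ay|near_ay] := boolP (cyclically_far m a y); first by exists a, y.
have [far_az|near_az] := boolP (cyclically_far m a z); first by exists a, z.
exists y, z; split => //.
move: near_ay near_az; rewrite /cyclically_far /y /z.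
case: ifP; case: ifP; lia.
Qed.

Lemma nth_rot (T : Type) (x0 : T) (s : seq T) k j : k <= size s -> j < size s ->
  nth x0 (rot k s) j = nth x0 s ((k + j) %% size s).
Proof.
move=> k_le j_lt; rewrite nth_cat size_drop; case: ltnP => j_k.
  by rewrite nth_drop modn_small // -ltn_subRL.
have -> : (k + j = j - (size s - k) + size s)%N by lia.
by rewrite modnDr modn_small ?nth_take //; lia.
Qed.

Local Open Scope ring_scope.

Definition prod_eta (s : seq int) : 'M[int]_2 := \prod_(x <- s) Defs.eta x.

Lemma mul_eta_col0 (A : 'M[int]_2) (c : int) (i : 'I_2) :
  (A *m Defs.eta c) i 0 = c * A i 0 + A i 1.
Proof.
rewrite !mxE !big_ord_recl big_ord0 !mxE /= mulr1 addr0 mulrC.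
by congr (_ * A i _ + A i _); apply: val_inj.
Qed.

Lemma mul_eta_col1 (A : 'M[int]_2) (c : int) (i : 'I_2) :
  (A *m Defs.eta c) i 1 = - A i 0.
Proof.
rewrite !mxE !big_ord_recl big_ord0 !mxE /= mulr0 !addr0 mulrN1.
by congr (- A i _); apply: val_inj.
Qed.

Lemma prod_eta_rcons s c : prod_eta (rcons s c) = prod_eta s *m Defs.eta c.
Proof. by rewrite /prod_eta big_rcons mulmxE. Qed.

Lemma prod_eta_growth s : all (fun x => 2 <= `|x|) s ->
  `|prod_eta s 0 1| < `|prod_eta s 0 0| /\ (size s)%:Z < `|prod_eta s 0 0|.
Proof.
elim/last_ind: s => [|s c IH]; first by rewrite /prod_eta big_nil !mxE.
rewrite all_rcons size_rcons prod_eta_rcons mul_eta_col0 mul_eta_col1 normrN.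
case/andP=> c_ge2 /IH[]; set x := prod_eta s 0 0; set y := prod_eta s 0 1 => y_lt x_gt.
have cx_ge : 2 * `|x| <= `|c * x| by rewrite normrM ler_wpM2r.
have cx_le : `|c * x| <= `|c * x + y| + `|y| by have := ler_normB (c * x + y) y; rewrite addrK.
lia.
Qed.

Lemma mulmx_eqN1C (R : comPzRingType) n (A B : 'M[R]_n) :
  A *m B = - 1%:M -> B *m A = - 1%:M.
Proof.
move=> AB; apply: oppr_inj; rewrite -mulmxN opprK; apply: mulmx1C.
by rewrite mulNmx AB opprK.
Qed.

Lemma quiddity_cycle_rot k c : quiddity_cycle c -> quiddity_cycle (rot k c).
Proof.
rewrite /quiddity_cycle /rot -{1}(cat_take_drop k c) !big_cat.
exact: mulmx_eqN1C.
Qed.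

Lemma quiddity_cycle_not_all_ge2 u a b : (0 < size u)%N ->
  quiddity_cycle (rcons (rcons u a) b) -> ~~ all (fun x => 2 <= `|x|) u.
Proof.
move=> u_gt0 q; apply/negP => /prod_eta_growth[_].
have := congr1 (fun M : 'M[int]_2 => M 0 0) q; have := congr1 (fun M : 'M[int]_2 => M 0 1) q.
rewrite -[\prod_(_ <- _) _]/(prod_eta _) !prod_eta_rcons !(mul_eta_col0, mul_eta_col1) !mxE /=.
move=> e01 e00; lia.
Qed.

Lemma quiddity_cycle_small_window c k : quiddity_cycle c -> (2 < size c)%N ->
  (k < size c)%N -> exists2 j, (j < size c - 2)%N & `|nth 0 c ((k + j) %% size c)| < 2.
Proof.
move=> qc c_gt2 k_lt; have := quiddity_cycle_rot k qc.
have s_size : size (rot k c) = size c := size_rot k c.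
set s := rot k c in s_size *; set u := take (size c - 2) s.
have u_size : size u = (size c - 2)%N by rewrite size_take s_size ifT //; lia.
have : size (drop (size c - 2) s) = 2%N by rewrite size_drop s_size; lia.
case E: (drop _ s) => [|a [|b []]] // _.
rewrite -(cat_take_drop (size c - 2) s) E -/u -(cat1s a [:: b]) catA !cats1.
have u_gt0 : (0 < size u)%N by rewrite u_size; lia.
move=> /(quiddity_cycle_not_all_ge2 u_gt0); rewrite -has_predC => /(has_nthP 0)[j].
rewrite u_size /= -ltNge => j_lt; rewrite nth_take // => small_j; exists j => //.
by rewrite -nth_rot //; [exact: ltnW | lia].
Qed.

Theorem corollary6p3 (c : seq int) :
  quiddity_cycle c -> (3 < size c)%N ->
  exists j k : nat,
    (j < size c)%N /\ (k < size c)%N /\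
    (1 < `|(j%:Z - k%:Z)%R|)%N /\
    ~ ((j == 0%N) && (k == (size c).-1) || (k == 0%N) && (j == (size c).-1)) /\
    (`|nth 0%R c j| < 2)%R /\ (`|nth 0%R c k| < 2)%R.
Proof.
move=> qc c_gt3.
have windows := quiddity_cycle_small_window qc (ltnW c_gt3).
have [j [k [j_lt k_lt /andP[dist_gt1 not_ends] small_j small_k]]] :=
  far_pair_of_windows (P := fun i => `|nth 0 c i| < 2) c_gt3 windows.
by exists j, k; do !split => //; apply/negP.
Qed.
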